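(* There is $k_0$ such that the following holds for every $k\geq k_0$ and every $t\leq k^{1/5}$. Every finite bipartite graph $G$ with $d(G)\geq k$ contains either (1) a subgraph $H$, bipartite with vertex classes $A$ and $B$, such that $d(H)\geq k/4$, $d_H(v)\leq k$ for every $v\in A$, and $|A|\geq k^6|B|$; or (2) a $C_4$-free subgraph with average degree at least $t$.
   Context: $d(F)=2e(F)/|V(F)|$ is the average degree and $d_H(v)$ the degree of $v$ in $H$. A graph is $C_4$-free if it contains no $4$-cycle as a subgraph. *)

From mathcomp Require Import all_boot.
From Stdlib Require Import Reals.
Set Implicit Arguments. Unset Strict Implicit. Unset Printing Implicit Defensive.

Section Graphs.
Variable T : finType.

(* A finite simple graph on vertex type T is a symmetric irreflexive relation e.
   Edges are 2-element sets {x,y}. *)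
Definition graph_edges (e : rel T) : {set {set T}} :=
  [set s | [exists x, exists y, [&& x != y, e x y & s == [set x; y]]]].

Definition is_subgraph (e : rel T) (V : {set T}) (F : {set {set T}}) : Prop :=
  forall s, s \in F -> exists x y, [/\ x \in V, y \in V, x != y, e x y & s = [set x; y]].

Definition avg_deg (V : {set T}) (F : {set {set T}}) : R :=
  if #|V| == 0%N then 0%R else (2 * INR #|F| / INR #|V|)%R.

Definition deg (F : {set {set T}}) (v : T) : nat := #|[set u | [set u; v] \in F]|.

Definition C4_free (F : {set {set T}}) : Prop :=
  ~ exists a b c d : T,
      [/\ uniq [:: a; b; c; d],
          [set a; b] \in F, [set b; c] \in F, [set c; d] \in F & [set d; a] \in F].

Definition bipartite (e : rel T) : Prop :=
  exists A B : {set T}, [/\ [disjoint A & B], A :|: B = setT &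
    forall x y, e x y -> (x \in A /\ y \in B) \/ (x \in B /\ y \in A)].

Definition bipartite_with (A B : {set T}) (F : {set {set T}}) : Prop :=
  [disjoint A & B] /\
  forall s, s \in F -> exists a b, [/\ a \in A, b \in B & s = [set a; b]].

End Graphs.

(* Let N = floor k and let K be least with N < K^5, so that t <= K.  Pass to a
   subgraph of minimum degree > N/2 and keep N/2 neighbours, in the other
   colour class Y, of each vertex of the larger class X.  Call y in Y heavy if
   more than (N+1)^8 vertices of X see it.  Either the vertices of X with N/7
   heavy neighbours outnumber the heavy vertices by a factor (N+1)^6, and these
   stars give alternative (1), or at least half of X keeps most of its
   neighbourhood among the light vertices, whose degrees are below K^41.
   Grouping the light vertices into the 41 classes K^j <= deg < K^(j+1), one
   class V carries a 1/41 share of the edges.  Take a maximal family of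
   500K-subsets S_c of the neighbourhoods in V, pairwise sharing at most one
   vertex: the union of the stars from c to S_c is C_4-free.  By maximality,
   no other x of X has 500K neighbours no two of which lie in a common S_c, so
   many pairs of its neighbours do; as every vertex of V has fewer than
   K^(j+1) neighbours, the family uses a positive fraction of X, and its union
   has average degree at least K >= t. *)

(* Reals comes first so that MathComp's notations for nat arithmetic win. *)
From Stdlib Require Import Reals Lra ZArith.
From mathcomp Require Import all_boot zify.
Set Implicit Arguments. Unset Strict Implicit. Unset Printing Implicit Defensive.

Section Counting.
Variable T : finType.
Implicit Types (A B X Y : {set T}) (P : pred T) (N : T -> {set T}).

Definition take_set (n : nat) A : {set T} := [set x in take n (enum A)].

Lemma take_set_sub n A : take_set n A \subset A.
Proof. by apply/subsetP => x; rewrite inE => /mem_take; rewrite mem_enum. Qed.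

Lemma card_take_set n A : n <= #|A| -> #|take_set n A| = n.
Proof.
move=> nA; rewrite cardsE; move/card_uniqP: (take_uniq n (enum_uniq A)) => ->.
by rewrite size_takel // -cardE.
Qed.

Lemma card_sep A P : #|[set x in A | P x]| = \sum_(x in A) P x.
Proof.
rewrite -sum1dep_card big_mkcond [RHS]big_mkcond; apply: eq_bigr => x _.
by case: (x \in A); case: (P x).
Qed.

Lemma sum_mem_card A : \sum_x (x \in A : nat) = #|A|.
Proof. by rewrite -sum1_card [RHS]big_mkcond; apply: eq_bigr => x _; case: (x \in A). Qed.

Lemma cardsI_sum A B : #|A :&: B| = \sum_(x in A) (x \in B).
Proof. by rewrite -card_sep; apply: eq_card => x; rewrite !inE. Qed.

Lemma leq_sum_subset A B (f : T -> nat) :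
  A \subset B -> \sum_(x in A) f x <= \sum_(x in B) f x.
Proof. by move=> AB; rewrite [leqRHS](big_setID A) /= (setIidPr AB) leq_addr. Qed.

Lemma sum_le_threshold X (f : T -> nat) (m del : nat) :
    (forall x, x \in X -> f x <= m) ->
  \sum_(x in X) f x <= #|[set x in X | del <= f x]| * m + #|X| * del.
Proof.
move=> fm; set X' := [set x in X | del <= f x].
have X'X : X' \subset X by apply/subsetP => x; rewrite inE => /andP [].
rewrite (big_setID X') /= (setIidPr X'X); apply: leq_add.
  by rewrite -sum_nat_const; apply: leq_sum => x /(subsetP X'X) /fm.
apply: (@leq_trans (\sum_(x in X :\: X') del)).
  apply: leq_sum => x; rewrite !inE => /andP [xX' xX].
  by move: xX'; rewrite xX -ltnNge => /ltnW.
by rewrite sum_nat_const leq_mul2r subset_leq_card ?subsetDl ?orbT.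
Qed.

Lemma cardsU_disjoint A B : [disjoint A & B] -> #|A :|: B| = #|A| + #|B|.
Proof. by move=> dAB; rewrite cardsU (disjoint_setI0 dAB) cards0 subn0. Qed.

Lemma set2_eq (a b c d : T) :
  [set a; b] = [set c; d] -> (a = c /\ b = d) \/ (a = d /\ b = c).
Proof.
move=> E.
have: a \in [set c; d] by rewrite -E set21.
have: b \in [set c; d] by rewrite -E set22.
have: c \in [set a; b] by rewrite E set21.
have: d \in [set a; b] by rewrite E set22.
rewrite !inE => /orP[]/eqP dE /orP[]/eqP cE /orP[]/eqP bE /orP[]/eqP aE; subst; auto.
Qed.

Definition deg_from X N (y : T) : nat := #|[set x in X | y \in N x]|.

Lemma sum_deg_from X Y N :
  \sum_(y in Y) deg_from X N y = \sum_(x in X) #|N x :&: Y|.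
Proof.
under eq_bigr => y _ do rewrite /deg_from card_sep.
rewrite exchange_big /=; apply: eq_bigr => x _.
by rewrite -card_sep; apply: eq_card => y; rewrite !inE andbC.
Qed.

Lemma sum_nbhds X N (g : T -> nat) :
  \sum_(x in X) \sum_(y in N x) g y = \sum_y deg_from X N y * g y.
Proof.
under eq_bigr => x _ do rewrite big_mkcond /=.
rewrite exchange_big /=; apply: eq_bigr => y _.
rewrite /deg_from card_sep big_distrl /=; apply: eq_bigr => x _.
by case: (y \in N x); rewrite ?mul1n ?mul0n.
Qed.

Lemma sum_deg_from_le X Y N m : (forall x, x \in X -> #|N x| <= m) ->
  \sum_(y in Y) deg_from X N y <= m * #|X|.
Proof.
move=> Nm; rewrite sum_deg_from mulnC -sum_nat_const; apply: leq_sum => x xX.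
exact: leq_trans (subset_leq_card (subsetIl _ _)) (Nm x xX).
Qed.

Lemma deg_from_gt0 X Y N y :
  (forall x, x \in X -> N x \subset Y) -> 0 < deg_from X N y -> y \in Y.
Proof.
move=> NY /card_gt0P [x]; rewrite inE => /andP [xX yN].
exact: subsetP (NY x xX) y yN.
Qed.

Lemma card_high_deg_from X N (m L : nat) : (forall x, x \in X -> #|N x| <= m) ->
  L.+1 * #|[set y | L < deg_from X N y]| <= m * #|X|.
Proof.
move=> Nm; apply: leq_trans (sum_deg_from_le _ Nm).
by rewrite mulnC -sum_nat_const; apply: leq_sum => y; rewrite inE.
Qed.

Lemma deg_from_eq0 X N y :
  (forall x, x \in X -> y \notin N x) -> deg_from X N y = 0.
Proof.
move=> yN; apply: eq_card0 => x; rewrite inE; apply/negbTE/andP => -[xX].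
exact/negP/yN.
Qed.

Lemma deg_from_sub X X' N N' y : X' \subset X -> (forall x, N' x \subset N x) ->
  deg_from X' N' y <= deg_from X N y.
Proof.
move=> XX' NN'; apply: subset_leq_card; apply/subsetP => x; rewrite !inE.
by case/andP => /(subsetP XX') -> /(subsetP (NN' x)).
Qed.

End Counting.

Section Star.
Variables (T : finType) (A B : {set T}) (S : T -> {set T}).

Definition star : {set {set T}} :=
  [set [set p.1; p.2] | p in [set p : T * T | (p.1 \in A) && (p.2 \in S p.1)]].

Hypotheses (disjAB : [disjoint A & B]) (SB : forall a, a \in A -> S a \subset B).

Lemma notin_star_side a y : a \in A -> y \in S a -> y \notin A.
Proof.
move=> aA /(subsetP (SB aA)) yB; apply: contraTN disjAB => yA.
by apply/pred0Pn; exists y; rewrite /= yA.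
Qed.

Lemma in_star a b : a \in A -> b \in S a -> [set a; b] \in star.
Proof. by move=> aA bS; apply/imsetP; exists (a, b); rewrite ?inE /= ?aA. Qed.

Lemma starP s : s \in star -> exists a b, [/\ a \in A, b \in S a & s = [set a; b]].
Proof. by case/imsetP => p; rewrite inE => /andP [p1 p2] ->; exists p.1, p.2. Qed.

Lemma star_nbr u v : u \in A -> [set u; v] \in star -> v \in S u.
Proof.
move=> uA /starP [a [b [aA bS /set2_eq [[-> ->] | [uE _]]]]] //.
by rewrite uE (negPf (notin_star_side aA bS)) in uA.
Qed.

Lemma star_other u v : u \notin A -> [set u; v] \in star -> v \in A /\ u \in S v.
Proof.
move=> uA /starP [a [b [aA bS /set2_eq [[uE _] | [-> ->]]]]] //.
by rewrite uE aA in uA.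
Qed.

Lemma card_star : #|star| = \sum_(a in A) #|S a|.
Proof.
rewrite card_in_imset; last first.
  move=> [a b] [c d]; rewrite !inE /= => /andP [aA bS] /andP [cA dS].
  case/set2_eq => [[-> ->] // | [ad bc]].
  by rewrite ad (negPf (notin_star_side cA dS)) in aA.
rewrite -sum1dep_card.
rewrite -(pair_big_dep (fun a => a \in A) (fun a b => b \in S a) (fun _ _ => 1)) /=.
by apply: eq_bigr => a _; rewrite sum1_card.
Qed.

Lemma deg_star a : a \in A -> deg star a = #|S a|.
Proof.
move=> aA; apply: eq_card => u; rewrite inE.
apply/idP/idP => [|uS]; last by rewrite setUC in_star.
by rewrite setUC; apply: star_nbr.
Qed.

Lemma star_subgraph (e : rel T) :
  (forall a b, a \in A -> b \in S a -> e a b) -> is_subgraph e (A :|: B) star.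
Proof.
move=> eS s /starP [a [b [aA bS ->]]]; exists a, b; split => //.
- by rewrite inE aA.
- by rewrite inE (subsetP (SB aA)) ?orbT.
- by apply: contraNneq (notin_star_side aA bS) => <-.
- exact: eS.
Qed.

Lemma star_bipartite_with : bipartite_with A B star.
Proof.
split => // s /starP [a [b [aA bS ->]]]; exists a, b; split => //.
exact: (subsetP (SB aA)).
Qed.

(* The colour classes alternate along a 4-cycle of [star], so its two vertices
   in [A] have two common neighbours. *)
Lemma star_C4_free :
    (forall a a', a \in A -> a' \in A -> a != a' -> #|S a :&: S a'| <= 1) ->
  C4_free star.
Proof.
move=> Spacked [a [b [c [d [uabcd ab bc cd da]]]]].
move: uabcd; rewrite /= !inE !negb_or => /and4P [/and3P [ab' ac' _] /andP [_ bd'] _ _].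
have two_common x z y1 y2 : x \in A -> z \in A -> x != z -> y1 != y2 ->
    y1 \in S x -> y2 \in S x -> y1 \in S z -> y2 \in S z -> False.
  move=> xA zA xz y12 y1x y2x y1z y2z.
  have := Spacked x z xA zA xz; apply/negP; rewrite -ltnNge.
  by apply/card_gt1P; exists y1, y2; rewrite !inE y1x y2x y1z y2z.
rewrite [[set d; a]]setUC in da; rewrite [[set c; d]]setUC in cd.
have [aA | aA] := boolP (a \in A).
  have bS := star_nbr aA ab; have dS := star_nbr aA da.
  have [cA bSc] := star_other (notin_star_side aA bS) bc.
  have [_ dSc] := star_other (notin_star_side aA dS) cd.
  exact: (two_common a c b d).
have [bA aSb] := star_other aA ab; have [dA aSd] := star_other aA da.
have cSb := star_nbr bA bc; have cSd := star_nbr dA cd.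
exact: (two_common b d a c).
Qed.

End Star.

Section IndependentSet.
Variables (T : finType) (adj : rel T).
Hypothesis adj_sym : symmetric adj.

Definition independent (I : {set T}) : Prop :=
  forall u v, u \in I -> v \in I -> u != v -> ~~ adj u v.

Lemma exists_independent_set (h D : nat) (W : {set T}) : 0 < h ->
    (forall v, v \in W -> #|[set z in W | adj v z]| < h) -> D * h <= #|W| ->
  exists I : {set T}, [/\ I \subset W, #|I| = D & independent I].
Proof.
move=> h_gt0; elim: D W => [|D IH] W Wdeg Wcard.
  by exists set0; split; rewrite ?sub0set ?cards0 // => u v; rewrite inE.
have [v vW] : exists v, v \in W by apply/card_gt0P; move: Wcard; rewrite mulSn; lia.
pose W' := W :\: (v |: [set z in W | adj v z]).
have W'W : W' \subset W := subsetDl _ _.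
have W'card : D * h <= #|W'|.
  have : #|W :&: (v |: [set z in W | adj v z])| <= h.
    apply: leq_trans (subset_leq_card (subsetIr _ _)) _.
    by rewrite cardsU1; have := Wdeg v vW; case: (_ \in _) => /=; lia.
  by rewrite cardsD; move: Wcard; rewrite mulSn; lia.
have W'deg u : u \in W' -> #|[set z in W' | adj u z]| < h.
  move=> uW'; apply: leq_ltn_trans (Wdeg u (subsetP W'W u uW')).
  by apply/subset_leq_card/subsetP => z; rewrite !inE => /andP [/andP [_ ->] ->].
have [I [IW' <- indI]] := IH W' W'deg W'card.
have notadj w : w \in I -> (w != v) && ~~ adj v w.
  by move=> /(subsetP IW'); rewrite !inE negb_or => /andP [/andP [-> ]]; case: (w \in W).
exists (v |: I); split.
- by rewrite subUset sub1set vW (subset_trans IW' W'W).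
- by rewrite cardsU1; case: (boolP (v \in I)) => // /notadj; rewrite eqxx.
move=> u w; rewrite !inE => /orP [/eqP -> | uI] /orP [/eqP -> | wI].
- by rewrite eqxx.
- by move=> _; case/andP: (notadj w wI).
- by move=> _; rewrite adj_sym; case/andP: (notadj u uI).
- exact: indI.
Qed.

End IndependentSet.

Section Packing.
Variables (T : finType) (X : {set T}) (N : T -> {set T}) (D : nat).

Definition packing (C : {set T}) (S : T -> {set T}) : bool :=
  [&& C \subset X, [forall c in C, (S c \subset N c) && (#|S c| == D)] &
      [forall c in C, forall c' in C, (c != c') ==> (#|S c :&: S c'| <= 1)]].

Lemma packingP (C : {set T}) (S : T -> {set T}) :
  reflect [/\ C \subset X, forall c, c \in C -> S c \subset N c /\ #|S c| = D &
              forall c c', c \in C -> c' \in C -> c != c' -> #|S c :&: S c'| <= 1]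
          (packing C S).
Proof.
apply: (iffP and3P) => [[CX /forall_inP SN /forall_inP Sdisj] | [CX SN Sdisj]]; split => //.
- by move=> c /SN /andP [-> /eqP].
- by move=> c c' /Sdisj /forall_inP Sc c'C; move/implyP: (Sc c' c'C).
- by apply/forall_inP => c /SN [-> ->]; rewrite eqxx.
- apply/forall_inP => c cC; apply/forall_inP => c' c'C; apply/implyP; exact: Sdisj.
Qed.

Definition linked (C : {set T}) (S : T -> {set T}) : rel T :=
  fun y z => (y != z) && [exists c in C, (y \in S c) && (z \in S c)].

Lemma linked_sym C S : symmetric (linked C S).
Proof.
move=> y z; rewrite /linked eq_sym; congr (_ && _).
by apply/existsP/existsP => -[c /and3P [cC yS zS]]; exists c; rewrite cC yS zS.
Qed.

Lemma packing_extend C S x (I : {set T}) :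
    packing C S -> x \in X :\: C -> I \subset N x -> #|I| = D ->
    independent (linked C S) I ->
  packing (x |: C) [ffun z => if z == x then I else S z].
Proof.
move=> /packingP [CX SN Sdisj]; rewrite inE => /andP [xC xX] IN Icard indI.
have neq_x c : c \in C -> (c == x) = false.
  by move=> cC; apply/negbTE; apply: contraNneq xC => <-.
have IS c : c \in C -> #|I :&: S c| <= 1.
  move=> cC; rewrite leqNgt; apply/card_gt1P => -[u [v []]].
  rewrite !inE => /andP [uI uS] /andP [vI vS] uv.
  move/negP: (indI u v uI vI uv); apply; rewrite /linked uv.
  by apply/existsP; exists c; rewrite cC uS vS.
apply/packingP; split.
- by rewrite subUset sub1set xX CX.
- by move=> c /setU1P [-> | cC]; rewrite ffunE ?eqxx // neq_x //; apply: SN.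
move=> c c' /setU1P [-> | cC] /setU1P [-> | c'C]; rewrite !ffunE ?eqxx //.
- by rewrite neq_x // => _; apply: IS.
- by rewrite neq_x // setIC => _; apply: IS.
- by rewrite !neq_x //; apply: Sdisj.
Qed.

Lemma exists_maximal_packing : exists C (S : T -> {set T}), packing C S /\
  forall x (I : {set T}), x \in X :\: C -> I \subset N x -> #|I| = D ->
    ~ independent (linked C S) I.
Proof.
pose P (p : {set T} * {ffun T -> {set T}}) := packing p.1 p.2.
have P0 : P (set0, [ffun=> set0]).
  by apply/packingP; split => [|c|c c']; rewrite ?sub0set ?inE.
have [[C S] CS Cmax] := arg_maxnP (fun p : {set T} * {ffun T -> {set T}} => #|p.1|) P0.
exists C, S; split => // x I xXC IN Icard indI.
have := Cmax (x |: C, [ffun z => if z == x then I else S z]).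
move/(_ (packing_extend CS xXC IN Icard indI)).
by move: xXC; rewrite /= cardsU1 inE => /andP [/negPf ->]; rewrite ltnn.
Qed.

Definition linked_pairs C S (x : T) : nat :=
  \sum_(y in N x) #|[set z in N x | linked C S y z]|.

Lemma linked_pairs_lower C S x (h del : nat) :
    (forall I : {set T}, I \subset N x -> #|I| = D -> ~ independent (linked C S) I) ->
    0 < h -> 2 * (D * h) <= del -> del <= #|N x| ->
  del * h <= 2 * linked_pairs C S x.
Proof.
move=> noind h_gt0 hdel Nxdel.
pose U := [set y in N x | #|[set z in N x | linked C S y z]| < h].
have Ucard : #|U| < D * h.
  rewrite ltnNge; apply/negP => DhU.
  have Udeg v : v \in U -> #|[set z in U | linked C S v z]| < h.
    rewrite inE => /andP [_]; apply: leq_ltn_trans; apply: subset_leq_card.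
    by apply/subsetP => z; rewrite !inE => /andP [/andP [-> _] ->].
  have [I [IU Icard indI]] := exists_independent_set (@linked_sym C S) h_gt0 Udeg DhU.
  apply: (noind I) => //; apply: subset_trans IU _.
  by apply/subsetP => y; rewrite inE => /andP [].
have NU_pairs : #|N x :\: U| * h <= linked_pairs C S x.
  rewrite /linked_pairs (big_setID U) /= -sum_nat_const; apply: leq_trans (leq_addl _ _).
  by apply: leq_sum => y; rewrite !inE => /andP [yU yN]; move: yU; rewrite yN -leqNgt.
have NU_U : #|N x :&: U| <= #|U| by apply/subset_leq_card/subsetIr.
apply: (@leq_trans (2 * (#|N x :\: U| * h))); last by rewrite leq_mul2l NU_pairs orbT.
by rewrite cardsD mulnA leq_mul2r; apply/orP; right; lia.
Qed.

Lemma count_linked C S :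
  packing C S -> \sum_y #|[set z | linked C S y z]| <= #|C| * (D * D).
Proof.
case/packingP => _ SN _.
apply: (@leq_trans (\sum_y \sum_z \sum_(c in C) ((y \in S c) && (z \in S c) : nat))).
  apply: leq_sum => y _; rewrite -sum1dep_card big_mkcond /=; apply: leq_sum => z _.
  case: ifP => // /andP [_ /existsP [c /and3P [cC yS zS]]].
  by rewrite (bigD1 c) //= yS zS.
under eq_bigr => y _ do rewrite exchange_big /=.
rewrite exchange_big /= -sum_nat_const; apply: eq_leq; apply: eq_bigr => c cC.
under eq_bigr => y _ do under eq_bigr => z _ do rewrite -mulnb.
by rewrite -big_distrlr /= sum_mem_card; case: (SN c cC) => _ ->.
Qed.

Lemma sum_linked_pairs C S (Lam : nat) :
    packing C S -> (forall y, deg_from X N y <= Lam) ->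
  \sum_(x in X :\: C) linked_pairs C S x <= #|C| * (D * D) * Lam.
Proof.
move=> CS degLam.
apply: (@leq_trans (\sum_(x in X) \sum_(y in N x) #|[set z | linked C S y z]|)).
  apply: leq_trans (leq_sum_subset _ (subsetDl X C)).
  apply: leq_sum => x _; apply: leq_sum => y _; apply: subset_leq_card.
  by apply/subsetP => z; rewrite !inE => /andP [].
rewrite sum_nbhds; apply: (@leq_trans (\sum_y Lam * #|[set z | linked C S y z]|)).
  by apply: leq_sum => y _; rewrite leq_mul2r degLam orbT.
by rewrite -big_distrr /= mulnC leq_mul2r count_linked ?orbT.
Qed.

Lemma greedy_packing (h del Lam : nat) :
    (forall x, x \in X -> del <= #|N x|) -> (forall y, deg_from X N y <= Lam) ->
    0 < h -> 2 * (D * h) <= del ->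
  exists C (S : T -> {set T}),
    packing C S /\ #|X :\: C| * (del * h) <= 2 * (#|C| * (D * D) * Lam).
Proof.
move=> Nlarge degLam h_gt0 hdel.
have [C [S [CS Cmax]]] := exists_maximal_packing.
exists C, S; split => //; rewrite -sum_nat_const.
apply: (@leq_trans (\sum_(x in X :\: C) 2 * linked_pairs C S x)).
  apply: leq_sum => x xXC; apply: (linked_pairs_lower (fun I => Cmax x I xXC) h_gt0 hdel).
  by apply: Nlarge; move: xXC; rewrite inE => /andP [].
by rewrite -big_distrr leq_mul2l sum_linked_pairs ?orbT.
Qed.

End Packing.

Lemma packing_sub (T : finType) (X X' : {set T}) (N N' : T -> {set T}) D C S :
    X \subset X' -> (forall x, N x \subset N' x) ->
  packing X N D C S -> packing X' N' D C S.
Proof.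
move=> XX' NN' /packingP [CX SN Sdisj]; apply/packingP; split => //.
  exact: subset_trans XX'.
by move=> c /SN [SNc ->]; rewrite (subset_trans SNc).
Qed.

Section MinDegree.
Variables (T : finType) (e : rel T).
Hypotheses (e_sym : symmetric e) (e_irr : irreflexive e).

Definition nbhd (W : {set T}) (v : T) : {set T} := [set u in W | e v u].

Definition deg_sum (W : {set T}) : nat := \sum_(v in W) #|nbhd W v|.

(* Each edge {x, y} is the image of an arc (x, y) with x before y in the
   enumeration of T, and also of an arc with x after y. *)
Lemma edges_le_deg_sum : 2 * #|graph_edges e| <= deg_sum [set: T].
Proof.
pose arcs := [set p : T * T | e p.1 p.2].
pose up := [set p in arcs | enum_rank p.1 < enum_rank p.2].
pose down := [set p in arcs | enum_rank p.2 < enum_rank p.1].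
pose edge (p : T * T) := [set p.1; p.2].
have arcs_deg : #|arcs| = deg_sum [set: T].
  rewrite -sum1dep_card -(pair_big_dep xpredT (fun a b => e a b) (fun _ _ => 1)) /=.
  by apply: eq_big => [v | v _]; rewrite ?inE // sum1dep_card; apply: eq_card => u; rewrite !inE.
have edges_sub (Q : {set T * T}) : (forall x y, e x y -> enum_rank x < enum_rank y ->
    (x, y) \in Q \/ (y, x) \in Q) -> graph_edges e \subset edge @: Q.
  move=> HQ; apply/subsetP => s; rewrite inE.
  case/existsP => x /existsP [y /and3P [xy exy /eqP ->]].
  have [xy_rank | yx_rank | /val_inj/enum_rank_inj xyE] := ltngtP (enum_rank x) (enum_rank y).
  - case: (HQ x y exy xy_rank) => xyQ; apply/imsetP; first by exists (x, y).
    by exists (y, x); rewrite // setUC.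
  - rewrite e_sym in exy; case: (HQ y x exy yx_rank) => yxQ; apply/imsetP.
      by exists (y, x); rewrite // setUC.
    by exists (x, y).
  - by rewrite xyE eqxx in xy.
have up_edges : #|graph_edges e| <= #|up|.
  apply: leq_trans (leq_imset_card edge up); apply/subset_leq_card/edges_sub => x y exy xy.
  by left; rewrite !inE exy.
have down_edges : #|graph_edges e| <= #|down|.
  apply: leq_trans (leq_imset_card edge down); apply/subset_leq_card/edges_sub => x y exy xy.
  by right; rewrite !inE e_sym exy.
have : #|up :|: down| <= #|arcs|.
  by apply/subset_leq_card/subsetP => p; rewrite !inE => /orP [] /andP [].
rewrite cardsU_disjoint; first by lia.
rewrite -setI_eq0; apply/eqP/setP => p; rewrite !inE.
by apply/negP => /andP [/andP [_ lt12] /andP [_ /(ltn_trans lt12)]]; rewrite ltnn.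
Qed.

Lemma deg_sumD1 (W : {set T}) v :
  v \in W -> deg_sum W = deg_sum (W :\ v) + 2 * #|nbhd W v|.
Proof.
move=> vW; rewrite /deg_sum (big_setD1 v vW) /=.
have nbhdD1 u : u \in W :\ v -> #|nbhd W u| = #|nbhd (W :\ v) u| + e u v.
  move=> uWv; rewrite (cardsD1 v) addnC; congr (_ + _).
    by apply: eq_card => z; rewrite !inE; case: (z == v).
  by rewrite !inE vW.
rewrite (eq_bigr _ nbhdD1) big_split /=.
suff -> : \sum_(u in W :\ v) (e u v : nat) = #|nbhd W v| by lia.
rewrite -card_sep; apply: eq_card => u; rewrite !inE e_sym.
by case: eqP => [-> | _]; rewrite ?e_irr ?andbF.
Qed.

(* A vertex-minimal [W] with [N * #|W| <= deg_sum W] has minimum degree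
   greater than [N / 2]: deleting a vertex of smaller degree would keep the
   inequality. *)
Lemma exists_min_degree_subgraph (W0 : {set T}) (N : nat) :
    0 < N -> 0 < #|W0| -> N * #|W0| <= deg_sum W0 ->
  exists W : {set T}, 0 < #|W| /\ forall v, v \in W -> N < 2 * #|nbhd W v|.
Proof.
move=> N_gt0 W0_gt0 W0deg.
pose dense (W : {set T}) := (0 < #|W|) && (N * #|W| <= deg_sum W).
have dense_W0 : dense W0 by rewrite /dense W0_gt0 W0deg.
have [W /andP [W_gt0 Wdeg] Wmin] := arg_minnP (fun W : {set T} => #|W|) dense_W0.
exists W; split => // v vW; rewrite ltnNge; apply/negP => small_v.
have Wv : #|W| = #|W :\ v|.+1 by rewrite (cardsD1 v W) vW.
move: Wdeg; rewrite (deg_sumD1 vW) Wv => Wdeg.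
have [Wv0 | Wv_gt0] := posnP #|W :\ v|.
  have nbhd_v : #|nbhd W v| <= #|W :\ v|.
    apply/subset_leq_card/subsetP => u; rewrite !inE => /andP [-> evu]; rewrite andbT.
    by apply: contraTneq evu => ->; rewrite e_irr.
  by move: Wdeg; rewrite {1}/deg_sum (cards0_eq Wv0) big_set0 cards0; lia.
have : dense (W :\ v) by rewrite /dense Wv_gt0 /=; lia.
by move/Wmin; rewrite Wv; lia.
Qed.

End MinDegree.

Section DegreeClasses.
Variables (T : finType) (X : {set T}) (N : T -> {set T}) (K : nat).
Hypothesis K_gt1 : 1 < K.

Definition deg_class (j : nat) : {set T} :=
  [set y | (0 < deg_from X N y) && (trunc_log K (deg_from X N y) == j)].

Lemma deg_classP j y : y \in deg_class j -> K ^ j <= deg_from X N y < K ^ j.+1.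
Proof.
rewrite inE => /andP [deg_gt0 /eqP <-].
by rewrite trunc_logP ?trunc_log_ltn.
Qed.

Lemma deg_class_pigeonhole n : (forall y, deg_from X N y < K ^ n.+1) ->
  exists j : 'I_n.+1,
    \sum_(x in X) #|N x| <= n.+1 * \sum_(x in X) #|N x :&: deg_class j|.
Proof.
move=> deg_small.
have classes x : x \in X -> \sum_(j < n.+1) #|N x :&: deg_class j| = #|N x|.
  move=> xX; under eq_bigr => j _ do rewrite cardsI_sum.
  rewrite exchange_big -sum1_card; apply: eq_bigr => y yN.
  have deg_gt0 : 0 < deg_from X N y by apply/card_gt0P; exists x; rewrite inE xX yN.
  have cls_lt : trunc_log K (deg_from X N y) < n.+1.
    rewrite -(ltn_exp2l _ _ K_gt1).
    exact: leq_ltn_trans (trunc_logP K_gt1 deg_gt0) (deg_small y).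
  rewrite (bigD1 (Ordinal cls_lt)) //= big1 => [|j]; rewrite inE deg_gt0 /=.
    by rewrite eqxx.
  move=> jc; case: eqP => // cls_j; case/eqP: jc; exact: val_inj.
pose F (j : 'I_n.+1) := \sum_(x in X) #|N x :&: deg_class j|.
have [jm _ jm_max] := arg_maxnP F (isT : xpredT ord0).
exists jm; rewrite -(eq_bigr _ classes) exchange_big /=.
apply: (@leq_trans (\sum_(j < n.+1) F jm)).
  by apply: leq_sum => j _; exact: jm_max.
by rewrite sum_nat_const card_ord.
Qed.

End DegreeClasses.

Lemma arith_few_senders (N a b x : nat) :
  a < N.+1 ^ 6 * b -> N.+1 ^ 8 * b <= N * x -> 2 * a <= x.
Proof.
rewrite (_ : 8 = 6 + 2) // expnD.
have : 2 * N + 1 <= N.+1 ^ 2 by rewrite expnS expn1; lia.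
by set P := N.+1 ^ 2; set Q := N.+1 ^ 6; nia.
Qed.

Lemma arith_dense_fraction (N a b : nat) : 1000 <= N ->
    a * ((N %/ 2).+1 - N %/ 7) <= 41 * (b * (N %/ 2) + a * (N %/ 300)) ->
  a <= 100 * b.
Proof.
set m := N %/ 2; set r := N %/ 7; set del := N %/ 300 => N_large.
have : 41 * m + 4100 * del <= 100 * (m.+1 - r) by rewrite /m /r /del; lia.
have : 0 < m by rewrite /m; lia.
nia.
Qed.

Lemma arith_packing_slack (N K : nat) : 0 < K -> 10 ^ 18 * K ^ 4 <= N ->
  400 * (N %/ 2) * (500 * K) * (K * K) <= (N %/ 300) * ((N %/ 300) %/ (2 * (500 * K))).
Proof.
move=> K_gt0 NK.
set m := N %/ 2; set del := N %/ 300; set h := del %/ (2 * (500 * K)).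
have K_K4 : K <= K ^ 4 by rewrite -{1}(expn1 K) leq_pexp2l.
have del_large : 10 ^ 15 * K ^ 4 <= del by rewrite /del; lia.
have m_del : m <= 150 * del + 150 by rewrite /m /del; lia.
have h_del : del < 1000 * K * h + 1000 * K by rewrite /h; lia.
have K4 : K * K * K * K = K ^ 4 by rewrite !expnS expn0; lia.
suff : 1000 * K * (400 * m * (500 * K) * (K * K)) <= 1000 * K * (del * h).
  by rewrite leq_pmul2l; lia.
by set Z := K ^ 4 in K_K4 del_large K4 *; nia.
Qed.

(* In [packing_from_bounded_degrees]: a = |X|, b = |X3|, c = |C|, y = |V|,
   Q = K ^ j and P = del * h. *)
Lemma arith_packing_density (a b c y m D K Q P : nat) :
  0 < a -> a <= 100 * b -> y <= 2 * a -> Q * y <= m * a -> 0 < Q ->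
  (b - c) * P <= 2 * (c * (D * D) * (Q * K)) -> 400 * m * D * (K * K) <= P -> 0 < P ->
  401 * K <= 2 * D ->
  0 < c /\ K * (c + y) <= 2 * D * c.
Proof.
move=> a_gt0 ab ya Qy Q_gt0 bcP mP P_gt0 KD.
have c_gt0 : 0 < c.
  rewrite lt0n; apply: contraTneq bcP => ->; rewrite -ltnNge subn0 !mul0n muln0; nia.
split => //.
have [PD | DP] := leqP (2 * (D * D * (Q * K))) P.
- have : (b - c) * P <= c * P by nia.
  rewrite leq_pmul2r //; nia.
- have cP : c * P <= c * (2 * (D * D * (Q * K))) by rewrite leq_mul2l ltnW ?orbT.
  have bP : b * P <= 4 * (c * (D * D) * (Q * K)) by rewrite mulnBl in bcP; lia.
  have aP : a * P <= 400 * (c * (D * D) * (Q * K)) by nia.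
  have QyP : Q * y * P <= m * (400 * (c * (D * D) * (Q * K))).
    by apply: leq_trans (leq_mul Qy (leqnn P)) _; rewrite -mulnA leq_mul2l aP orbT.
  have yP : Q * (K * y * P) <= Q * (D * c * P).
    apply: leq_trans (_ : K * (m * (400 * (c * (D * D) * (Q * K)))) <= _); first nia.
    apply: leq_trans (_ : Q * (D * c) * (400 * m * D * (K * K)) <= _); first nia.
    by rewrite [leqRHS]mulnA; apply: leq_mul (leqnn _) mP.
  rewrite leq_pmul2l // leq_pmul2r // in yP; nia.
Qed.

Section Core.
Variables (T : finType) (K N : nat).
Hypotheses (K_gt1 : 1 < K) (N_large : 10 ^ 18 * K ^ 4 <= N).

Lemma packing_from_bounded_degrees (X Y : {set T}) (N2 : T -> {set T}) :
    #|Y| <= 2 * #|X| -> 0 < #|X| ->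
    (forall x, x \in X ->
       [/\ N2 x \subset Y, (N %/ 2).+1 - N %/ 7 <= #|N2 x| & #|N2 x| <= N %/ 2]) ->
    (forall y, deg_from X N2 y < K ^ 41) ->
  exists (V C : {set T}) (S : T -> {set T}),
    [/\ V \subset Y, packing X (fun x => N2 x :&: V) (500 * K) C S,
        0 < #|C| & K * (#|C| + #|V|) <= 2 * (500 * K) * #|C|].
Proof.
move=> YX X_gt0 N2P deg_small.
set m := N %/ 2; set del := N %/ 300; set D := 500 * K; set h := del %/ (2 * D).
have K_K4 : K <= K ^ 4 by rewrite -{1}(expn1 K) leq_pexp2l // ltnW.
have [j sum_j] := deg_class_pigeonhole K_gt1 deg_small.
set V := deg_class X N2 K j.
pose N3 x := N2 x :&: V.
pose X3 := [set x in X | del <= #|N3 x|].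
have X3X : X3 \subset X by apply/subsetP => x; rewrite inE => /andP [].
have N2m x : x \in X -> #|N2 x| <= m by case/N2P.
have X3_large : #|X| <= 100 * #|X3|.
  apply: (@arith_dense_fraction N); first lia.
  apply: (@leq_trans (\sum_(x in X) #|N2 x|)).
    by rewrite -sum_nat_const; apply: leq_sum => x /N2P [].
  apply: leq_trans sum_j _; rewrite leq_mul2l; apply/orP; right.
  apply: sum_le_threshold => x /N2m; exact/leq_trans/subset_leq_card/subsetIl.
have VY : V \subset Y.
  by apply/subsetP => y; rewrite inE => /andP [+ _]; apply: deg_from_gt0 => x /N2P [].
have V_card : K ^ j * #|V| <= m * #|X|.
  apply: leq_trans (sum_deg_from_le V N2m).
  by rewrite mulnC -sum_nat_const; apply: leq_sum => y /(deg_classP K_gt1) /andP [].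
have X3_deg y : deg_from X3 N3 y <= K ^ j.+1.
  case: (boolP (y \in V)) => yV; last first.
    by rewrite deg_from_eq0 // => x _; rewrite in_setI (negPf yV) andbF.
  apply/ltnW/(leq_ltn_trans (deg_from_sub y X3X (fun x => subsetIl _ _))).
  by case/andP: (deg_classP K_gt1 yV).
have h_gt0 : 0 < h by rewrite divn_gt0 /D /del; lia.
have hdel : 2 * (D * h) <= del by rewrite mulnA mulnC leq_divM.
have X3_del x : x \in X3 -> del <= #|N3 x| by rewrite inE => /andP [].
have [C [S [CS X3C]]] := greedy_packing X3_del X3_deg h_gt0 hdel.
have /packingP [CX3 _ _] := CS.
rewrite cardsD (setIidPr CX3) expnSr in X3C.
have V_X : #|V| <= 2 * #|X| by have := subset_leq_card VY; lia.
have Kj_gt0 : 0 < K ^ j by rewrite expn_gt0 ltnW.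
have P_gt0 : 0 < del * h by rewrite muln_gt0 h_gt0 andbT /del; lia.
have KD : 401 * K <= 2 * D by rewrite /D; lia.
have [C_gt0 C_dense] := arith_packing_density X_gt0 X3_large V_X V_card Kj_gt0 X3C
  (arith_packing_slack (ltnW K_gt1) N_large) P_gt0 KD.
exists V, C, S; split => //; exact: packing_sub X3X _ CS.
Qed.

Variables (X Y : {set T}) (N0 : T -> {set T}).
Hypotheses (YX : #|Y| <= #|X|) (X_gt0 : 0 < #|X|)
  (N0P : forall x, x \in X -> N0 x \subset Y /\ N %/ 2 <= #|N0 x|).

Let trimmed x := take_set (N %/ 2) (N0 x).
Let heavy := [set y | N.+1 ^ 8 < deg_from X trimmed y].
Let senders := [set x in X | N %/ 7 <= #|trimmed x :&: heavy|].
Let light x := trimmed x :\: heavy.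

Lemma trimmedP x :
  x \in X -> [/\ trimmed x \subset N0 x, trimmed x \subset Y & #|trimmed x| = N %/ 2].
Proof.
move=> /N0P [N0Y N0m]; have sub_N0 := take_set_sub (N %/ 2) (N0 x).
by rewrite sub_N0 (subset_trans sub_N0 N0Y) card_take_set.
Qed.

Lemma heavy_sub : heavy \subset Y.
Proof.
apply/subsetP => y; rewrite inE => /(leq_ltn_trans (leq0n _)).
by apply: deg_from_gt0 => x /trimmedP [].
Qed.

Lemma few_senders :
  ~~ ((0 < #|senders|) && (N.+1 ^ 6 * #|heavy| <= #|senders|)) -> 2 * #|senders| <= #|X|.
Proof.
case/nandP => [| light_heavy]; first by rewrite -eqn0Ngt => /eqP ->.
rewrite -ltnNge in light_heavy; apply: arith_few_senders light_heavy _.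
have trimmed_m x : x \in X -> #|trimmed x| <= N %/ 2 by case/trimmedP => _ _ ->.
apply: (@leq_trans ((N.+1 ^ 8).+1 * #|heavy|)); first by rewrite leq_mul2r leqnSn orbT.
by apply: leq_trans (card_high_deg_from _ trimmed_m) _; rewrite leq_mul2r leq_div orbT.
Qed.

Lemma lightP x : x \in X :\: senders ->
  [/\ light x \subset Y, (N %/ 2).+1 - N %/ 7 <= #|light x| & #|light x| <= N %/ 2].
Proof.
rewrite !inE => /andP [xA xX]; rewrite xX /= -ltnNge in xA.
have [_ trimmedY trimmed_card] := trimmedP xX.
rewrite /light cardsD trimmed_card leq_subr (subset_trans (subsetDl _ _) trimmedY).
by split => //; lia.
Qed.

Lemma light_deg_small (NK5 : N < K ^ 5) y : deg_from (X :\: senders) light y < K ^ 41.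
Proof.
have [yB | yB] := boolP (y \in heavy).
  by rewrite deg_from_eq0 ?expn_gt0 ?(ltnW K_gt1) // => x _; rewrite in_setD yB.
apply: leq_ltn_trans (deg_from_sub y (subsetDl X _) (fun x => subsetDl _ _)) _.
apply: (@leq_ltn_trans (N.+1 ^ 8)); first by move: yB; rewrite inE -leqNgt.
apply: (@leq_ltn_trans (K ^ 40)); last by rewrite ltn_exp2l.
by rewrite (_ : 40 = 5 * 8) // expnM leq_exp2r.
Qed.

Lemma star_or_packing : N < K ^ 5 ->
  (exists (A B : {set T}) (S : T -> {set T}),
     [/\ A \subset X, B \subset Y, 0 < #|A|,
         forall a, a \in A -> S a \subset N0 a :&: B /\ #|S a| = N %/ 7 &
         N.+1 ^ 6 * #|B| <= #|A|])
  \/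
  (exists (V C : {set T}) (S : T -> {set T}),
     [/\ V \subset Y, packing X (fun x => N0 x :&: V) (500 * K) C S,
         0 < #|C| & K * (#|C| + #|V|) <= 2 * (500 * K) * #|C|]).
Proof.
move=> NK5; have sendersX : senders \subset X by apply/subsetP => x; rewrite inE => /andP [].
have [/andP [senders_gt0 heavy_small] | many_light] :=
  boolP ((0 < #|senders|) && (N.+1 ^ 6 * #|heavy| <= #|senders|)).
  left; exists senders, heavy, (fun a => take_set (N %/ 7) (trimmed a :&: heavy)).
  split => //; first exact: heavy_sub.
  move=> a; rewrite inE => /andP [aX ra]; rewrite card_take_set //; split => //.
  by apply: subset_trans (take_set_sub _ _) _; apply: setSI; case/trimmedP: aX.
right; have senders_half := few_senders many_light.
have XA_card : #|X :\: senders| = #|X| - #|senders| by rewrite cardsD (setIidPr sendersX).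
have YXA : #|Y| <= 2 * #|X :\: senders| by rewrite XA_card; lia.
have XA_gt0 : 0 < #|X :\: senders| by rewrite XA_card; lia.
have [V [C [S [VY CS C_gt0 C_dense]]]] :=
  packing_from_bounded_degrees YXA XA_gt0 lightP (light_deg_small NK5).
exists V, C, S; split => //; apply: packing_sub CS; first exact: subsetDl.
by move=> x; apply: setSI; apply: subset_trans (subsetDl _ _) (take_set_sub _ _).
Qed.

End Core.

Lemma exists_one_sided_dense (T : finType) (e : rel T) (N : nat) :
    symmetric e -> irreflexive e -> bipartite e -> 0 < N -> 0 < #|T| ->
    N * #|T| <= 2 * #|graph_edges e| ->
  exists X Y : {set T}, [/\ [disjoint X & Y], #|Y| <= #|X|, 0 < #|X| &
    forall x, x \in X -> N %/ 2 <= #|nbhd e Y x|].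
Proof.
move=> e_sym e_irr [P [Q [dPQ PQ ePQ]]] N_gt0 T_gt0 Nedges.
have [W [W_gt0 Wdeg]] : exists W : {set T},
    0 < #|W| /\ forall v, v \in W -> N < 2 * #|nbhd e W v|.
  apply: (exists_min_degree_subgraph e_sym e_irr N_gt0 (W0 := [set: T])); rewrite cardsT //.
  exact: leq_trans Nedges (edges_le_deg_sum e_sym).
wlog QP : P Q dPQ PQ ePQ / #|W :&: Q| <= #|W :&: P|.
  move=> gen; have [|/ltnW] := leqP #|W :&: Q| #|W :&: P|; first exact: gen.
  by apply: gen; rewrite 1?disjoint_sym 1?setUC // => x y /ePQ [] []; auto.
exists (W :&: P), (W :&: Q); split => //.
- exact: disjointW (subsetIr _ _) (subsetIr _ _) dPQ.
- have : #|W :&: P :|: W :&: Q| <= #|W :&: P| + #|W :&: Q| by rewrite cardsU leq_subr.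
  by rewrite -setIUr PQ setIT; lia.
move=> x; rewrite inE => /andP [xW xP].
suff <- : nbhd e W x = nbhd e (W :&: Q) x by have := Wdeg x xW; lia.
apply/setP => u; rewrite !inE; have [exu | ] := boolP (e x u); rewrite ?andbF ?andbT //.
case: (ePQ x u exu) => [[_ ->] | [xQ _]]; first by rewrite andbT.
by rewrite (disjointFr dPQ xP) in xQ.
Qed.

Lemma exists_scale (N : nat) : 10 ^ 105 <= N ->
  exists K, [/\ 1 < K, 10 ^ 18 * K ^ 4 <= N & N < K ^ 5].
Proof.
move=> N_large.
have : exists K, N < K ^ 5 by exists N.+1; rewrite expnS leq_pmulr ?expn_gt0.
case/ex_minnP => K NK K_min.
have K_large : 10 ^ 21 < K.
  rewrite ltnNge; apply/negP => K_small.
  have : K ^ 5 <= (10 ^ 21) ^ 5 by rewrite leq_exp2r; [exact: K_small | ].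
  rewrite -expnM; lia.
have K5 : K ^ 5 <= 32 * N.
  have : K.-1 ^ 5 <= N by rewrite leqNgt; apply/negP => /K_min; lia.
  have : K ^ 5 <= (2 * K.-1) ^ 5 by rewrite leq_exp2r //; lia.
  rewrite expnMn; lia.
exists K; split => //; first lia.
have : K ^ 5 = K * K ^ 4 by rewrite expnS.
by set Z := K ^ 4; nia.
Qed.

Open Scope R_scope.

Lemma INR_leq (n m : nat) : (n <= m)%N -> INR n <= INR m.
Proof. by move/leP; apply: le_INR. Qed.

Lemma INR_muln (n m : nat) : INR (n * m) = INR n * INR m.
Proof. by rewrite -mult_INR multE. Qed.

Lemma INR_addn (n m : nat) : INR (n + m) = INR n + INR m.
Proof. by rewrite -plus_INR plusE. Qed.

Lemma INR_expn (n k : nat) : INR (n ^ k) = INR n ^ k.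
Proof. by elim: k => [|k IH]; rewrite ?expn0 // expnS INR_muln IH. Qed.

Lemma nat_floor (k : R) : 0 <= k -> exists N : nat, INR N <= k < INR N + 1.
Proof.
move=> k_ge0; have [k_up k_low] := base_Int_part k.
have Ik_ge0 : (0 <= Int_part k)%Z.
  have : (-1 < Int_part k)%Z by apply: lt_IZR; lra.
  lia.
exists (Z.to_nat (Int_part k)); rewrite INR_IZR_INZ Z2Nat.id //; lra.
Qed.

Lemma Rpower_fifth_root_le (k : R) (K : nat) :
  (0 < K)%N -> 0 < k -> k <= INR K ^ 5 -> Rpower k (1 / 5) <= INR K.
Proof.
move=> K_gt0 k_gt0 kK.
have K_pos : 0 < INR K by apply/lt_0_INR/ltP.
have root_pow : Rpower (INR K ^ 5) (1 / 5) = INR K.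
  rewrite -Rpower_pow // Rpower_mult (_ : INR 5 * (1 / 5) = 1) ?Rpower_1 //.
  by rewrite INR_IZR_INZ /=; field.
by rewrite -[X in _ <= X]root_pow; apply: Rle_Rpower_l => //; lra.
Qed.

Section AverageDegree.
Variable T : finType.

Lemma avg_deg_edges (e : rel T) (k : R) (N : nat) :
    avg_deg [set: T] (graph_edges e) >= k -> INR N <= k -> 0 < k ->
  (0 < #|T|)%N /\ (N * #|T| <= 2 * #|graph_edges e|)%N.
Proof.
rewrite /avg_deg cardsT; case: eqP => [_ | T_neq0] avg Nk k_gt0; first lra.
have T_pos : 0 < INR #|T| by apply/lt_0_INR/ltP; lia.
split; first lia.
have : INR N * INR #|T| <= 2 * INR #|graph_edges e|.
  apply: Rle_trans (_ : k * INR #|T| <= _); first by apply: Rmult_le_compat_r; lra.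
  have := Rmult_le_compat_r _ _ _ (Rlt_le _ _ T_pos) (Rge_le _ _ avg).
  by rewrite /Rdiv Rmult_assoc Rinv_l; lra.
by rewrite -INR_muln (_ : 2 = INR 2) // -INR_muln => /INR_le/leP.
Qed.

Lemma avg_deg_ge (V : {set T}) (F : {set {set T}}) (x : R) :
  (0 < #|V|)%N -> x * INR #|V| <= 2 * INR #|F| -> avg_deg V F >= x.
Proof.
move=> V_gt0 xVF; rewrite /avg_deg ifF; last by apply/negbTE; rewrite -lt0n.
have V_pos : 0 < INR #|V| by apply/lt_0_INR/ltP.
apply: Rle_ge; apply: (Rmult_le_reg_r (INR #|V|)) => //.
by rewrite /Rdiv Rmult_assoc Rinv_l; lra.
Qed.

End AverageDegree.

Section Alternatives.
Variables (T : finType) (e : rel T) (X Y : {set T}).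
Hypothesis disjXY : [disjoint X & Y].

Lemma dense_star_alternative (k : R) (N : nat) (A B : {set T}) (S : T -> {set T}) :
    INR N <= k < INR N + 1 -> (62 <= N)%N -> A \subset X -> B \subset Y ->
    (0 < #|A|)%N ->
    (forall a, a \in A -> S a \subset nbhd e Y a :&: B /\ #|S a| = N %/ 7) ->
    (N.+1 ^ 6 * #|B| <= #|A|)%N ->
  exists (A B : {set T}) (F : {set {set T}}),
    [/\ is_subgraph e (A :|: B) F, bipartite_with A B F,
        avg_deg (A :|: B) F >= k / 4,
        (forall v, v \in A -> INR (deg F v) <= k) &
        INR #|A| >= k ^ 6 * INR #|B| ].
Proof.
move=> [Nk kN] N_large AX BY A_gt0 SA AB.
have disjAB := disjointW AX BY disjXY.
have SB a : a \in A -> S a \subset B by move/SA => [/subset_trans-> //]; apply: subsetIr.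
have eS a y : a \in A -> y \in S a -> e a y.
  by move=> /SA [/subsetP SN _] /SN; rewrite !inE => /andP [/andP []].
exists A, B, (star A S); split.
- exact: star_subgraph.
- exact: star_bipartite_with.
- apply: avg_deg_ge; first by rewrite cardsU_disjoint // ltn_addr.
  rewrite (card_star disjAB SB) (eq_bigr (fun _ => N %/ 7)) => [|a /SA [] //].
  rewrite sum_nat_const cardsU_disjoint //.
  have : (N.+1 * (#|A| + #|B|) <= 8 * (#|A| * (N %/ 7)))%N.
    have : (N.+1 <= N.+1 ^ 6)%N by rewrite -{1}(expn1 N.+1) leq_pexp2l.
    nia.
  move/INR_leq; rewrite !INR_muln (_ : INR 8 = 8); last by rewrite INR_IZR_INZ.
  have : k * INR (#|A| + #|B|) <= INR N.+1 * INR (#|A| + #|B|).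
    by apply: Rmult_le_compat_r; [exact: pos_INR | rewrite S_INR; lra].
  rewrite INR_addn; lra.
- move=> a /[dup] aA /SA [_ Sa]; rewrite (deg_star disjAB SB aA) Sa.
  by apply: Rle_trans Nk; apply/INR_leq/leq_div.
- apply: Rle_ge; apply: Rle_trans (INR_leq AB); rewrite INR_muln INR_expn.
  apply: Rmult_le_compat_r; first exact: pos_INR.
  by apply: pow_incr; rewrite S_INR; have := pos_INR N; lra.
Qed.

Lemma C4_free_alternative (t : R) (K : nat) (V C : {set T}) (S : T -> {set T}) :
    t <= INR K -> V \subset Y ->
    packing X (fun x => nbhd e Y x :&: V) (500 * K) C S -> (0 < #|C|)%N ->
    (K * (#|C| + #|V|) <= 2 * (500 * K) * #|C|)%N ->
  exists (V : {set T}) (F : {set {set T}}),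
    [/\ is_subgraph e V F, C4_free F & avg_deg V F >= t].
Proof.
move=> tK VY /packingP [CX SN Sdisj] C_gt0 C_dense.
have disjCV := disjointW CX VY disjXY.
have SV c : c \in C -> S c \subset V by move/SN => [/subset_trans-> //]; apply: subsetIr.
have eS c y : c \in C -> y \in S c -> e c y.
  by move=> /SN [/subsetP SNc _] /SNc; rewrite !inE => /andP [/andP []].
exists (C :|: V), (star C S); split.
- exact: star_subgraph.
- exact: (star_C4_free disjCV SV Sdisj).
apply: avg_deg_ge; first by rewrite cardsU_disjoint // ltn_addr.
rewrite (card_star disjCV SV) (eq_bigr (fun _ => 500 * K)%N) => [|c /SN [] //].
rewrite sum_nat_const cardsU_disjoint //.
move/INR_leq: C_dense; rewrite !INR_muln (_ : INR 2 = 2) //.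
have := pos_INR (#|C| + #|V|); nra.
Qed.

End Alternatives.

Theorem corollary11 :
  exists k0 : R, forall k : R, k0 <= k -> forall t : R, t <= Rpower k (1/5) ->
  forall (T : finType) (e : rel T), symmetric e -> irreflexive e -> bipartite e ->
  avg_deg [set: T] (graph_edges e) >= k ->
  (exists (A B : {set T}) (F : {set {set T}}),
      [/\ is_subgraph e (A :|: B) F, bipartite_with A B F,
          avg_deg (A :|: B) F >= k / 4,
          (forall v, v \in A -> INR (deg F v) <= k) &
          INR #|A| >= k ^ 6 * INR #|B| ])
  \/
  (exists (V : {set T}) (F : {set {set T}}),
      [/\ is_subgraph e V F, C4_free F & avg_deg V F >= t]).
Proof.
exists (INR (10 ^ 105)) => k k_large t t_k T e e_sym e_irr e_bip e_avg.
have k_gt0 : 0 < k by apply: Rlt_le_trans k_large; apply/lt_0_INR/ltP; rewrite expn_gt0.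
have [N [Nk kN]] := nat_floor (Rlt_le _ _ k_gt0).
have N_large : (10 ^ 105 <= N)%N.
  rewrite -ltnS; apply/ltP/INR_lt; rewrite S_INR; lra.
have [K [K_gt1 NK4 NK5]] := exists_scale N_large.
have tK : t <= INR K.
  apply: (Rle_trans _ _ _ t_k); apply: Rpower_fifth_root_le (ltnW K_gt1) k_gt0 _.
  by rewrite -INR_expn; apply: Rle_trans (INR_leq NK5); rewrite S_INR; lra.
have N_gt0 : (0 < N)%N by lia.
have [T_gt0 Nedges] := avg_deg_edges e_avg Nk k_gt0.
have [X [Y [disjXY YX X_gt0 Xdeg]]] :=
  exists_one_sided_dense e_sym e_irr e_bip N_gt0 T_gt0 Nedges.
have N0P x : x \in X -> nbhd e Y x \subset Y /\ (N %/ 2 <= #|nbhd e Y x|)%N.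
  by move=> /Xdeg; split => //; apply/subsetP => y; rewrite inE => /andP [].
case: (star_or_packing K_gt1 NK4 YX X_gt0 N0P NK5) =>
  [[A [B [S [AX BY A_gt0 SA AB]]]] | [V [C [S [VY CS C_gt0 C_dense]]]]].
- left; apply: (dense_star_alternative disjXY (conj Nk kN) _ AX BY A_gt0 SA AB); lia.
- right; exact: (C4_free_alternative disjXY tK VY CS C_gt0 C_dense).
Qed.
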